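(* Let $(X,d)$ be a locally compact metric space with a flow $\pi$ and let $M$ be a compact subset of $X$. Then $\Omega(M)$ is quasi-attracting, i.e. $\Omega(M)$ is a closed set which is an intersection of attracting sets.
   Context: A flow is a continuous map $\pi: X\times\mathbb{R}\to X$ with $\pi(x,0)=x$ and $\pi(\pi(x,t),s)=\pi(x,t+s)$; write $x\cdot t=\pi(x,t)$ and $Y\cdot T=\{y\cdot s: y\in Y, s\in T\}$. A set $Y$ is positively invariant if $Y\cdot\mathbb{R}^+=Y$. For $Y\subseteq X$, $\omega(Y)=\bigcap_{t\ge0}\overline{Y\cdot[t,\infty)}$. A positively invariant closed set $A\subseteq X$ is an attracting set if there is a neighborhood $U$ of $A$ with $\omega(U)\subseteq A$; a closed set which is an intersection of attracting sets is a quasi-attracting set. For $x,y\in X$ and $\varepsilon,t>0$, an $(\varepsilon,t)$-chain from $x$ to $y$ is a pair of finite sequences $x=x_1,\dots,x_{n+1}=y$ in $X$ and $t_1,\dots,t_n$ in $\mathbb{R}^+$ with $t_i\ge t$ and $d(x_i\cdot t_i,x_{i+1})\le\varepsilon$ for all $i$. $\Omega(x)$ is the set of $y$ such that for every $\varepsilon,t>0$ there is an $(\varepsilon,t)$-chain from $x$ to $y$, and $\Omega(M)=\bigcup_{x\in M}\Omega(x)$. *)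

From Stdlib Require Import Reals.
Open Scope R_scope.

Record metric_space (X : Type) (d : X -> X -> R) : Prop := {
  ms_nonneg : forall x y, 0 <= d x y;
  ms_sep : forall x y, d x y = 0 <-> x = y;
  ms_sym : forall x y, d x y = d y x;
  ms_tri : forall x y z, d x z <= d x y + d y z }.

Section Topo.
Variables (X : Type) (d : X -> X -> R).

Definition mopen (U : X -> Prop) : Prop :=
  forall x, U x -> exists e, 0 < e /\ forall y, d x y < e -> U y.

Definition mclosure (S : X -> Prop) : X -> Prop :=
  fun y => forall e, 0 < e -> exists z, S z /\ d y z < e.

Definition mclosed (S : X -> Prop) : Prop :=
  forall y, mclosure S y -> S y.

Definition mcompact (K : X -> Prop) : Prop :=
  forall (I : Type) (U : I -> X -> Prop),
    (forall i, mopen (U i)) ->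
    (forall x, K x -> exists i, U i x) ->
    exists l : list I, forall x, K x -> exists i, List.In i l /\ U i x.

Definition mneighborhood (U A : X -> Prop) : Prop :=
  exists V, mopen V /\ (forall x, A x -> V x) /\ (forall x, V x -> U x).

Definition locally_compact : Prop :=
  forall x, exists K, mcompact K /\ mneighborhood K (fun y => y = x).
End Topo.

Section Flow.
Variables (X : Type) (d : X -> X -> R).

Definition is_flow (pi : X -> R -> X) : Prop :=
  (forall x t e, 0 < e -> exists del, 0 < del /\
      forall y s, d x y < del -> Rabs (t - s) < del -> d (pi x t) (pi y s) < e)
  /\ (forall x, pi x 0 = x)
  /\ (forall x t s, pi (pi x t) s = pi x (t + s)).

Variable pi : X -> R -> X.

Definition flow_image (Y : X -> Prop) (T : R -> Prop) : X -> Prop :=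
  fun z => exists y s, Y y /\ T s /\ z = pi y s.

Definition pos_invariant (Y : X -> Prop) : Prop :=
  forall z, flow_image Y (fun s => 0 <= s) z <-> Y z.

Definition omega_limit (Y : X -> Prop) : X -> Prop :=
  fun z => forall t, 0 <= t -> mclosure X d (flow_image Y (fun s => t <= s)) z.

Definition attracting_set (A : X -> Prop) : Prop :=
  pos_invariant A /\ mclosed X d A /\
  exists U, mneighborhood X d U A /\ forall z, omega_limit U z -> A z.

Definition quasi_attracting (A : X -> Prop) : Prop :=
  mclosed X d A /\
  exists (I : Type) (B : I -> X -> Prop),
    (forall i, attracting_set (B i)) /\ (forall z, A z <-> forall i, B i z).

(* (eps,t)-chain from x to y: x = x_1, ..., x_{n+1} = y, t_1..t_n >= t,
   d(x_i . t_i, x_{i+1}) <= eps.  Encoded as a nonempty list of (x_i, t_i), i=1..n, n >= 1. *)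
Fixpoint chain_from (eps t : R) (x y : X) (l : list (X * R)) : Prop :=
  match l with
  | nil => x = y
  | cons (xi, ti) l' =>
      xi = x /\ t <= ti /\
      exists xn, d (pi xi ti) xn <= eps /\ chain_from eps t xn y l'
  end.

Definition chain (eps t : R) (x y : X) : Prop :=
  exists l : list (X * R), l <> nil /\ chain_from eps t x y l.

Definition chain_limit (x : X) : X -> Prop :=
  fun y => forall eps t, 0 < eps -> 0 < t -> chain eps t x y.

Definition chain_limit_set (M : X -> Prop) : X -> Prop :=
  fun y => exists x, M x /\ chain_limit x y.
End Flow.

(* For eps, t > 0 let V(eps,t) be the open set of points lying strictly within
   eps of the end of the last jump of an (eps,t)-chain starting in M.  Its
   omega-limit set is attracting (with neighbourhood V(eps,t) itself), since
   following the flow from a point of V(eps,t) for time >= t and then jumping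
   by < eps stays in V(eps,t).  Omega(M) lies in every omega(V(eps,t)), and
   conversely a point lying in all V(eps,t) belongs to Omega(M): by compactness
   of M and continuity of the flow, finitely many balls around points of M with
   uniform (eps,t) bounds suffice to reroute a fine chain from a nearby start
   into a coarser chain from the centre. *)
From Stdlib Require Import Reals Lra Classical List.
Open Scope R_scope.

Lemma list_lower_bound (A : Type) (f : A -> R) (l : list A) :
  (forall a, In a l -> 0 < f a) -> exists m, 0 < m /\ forall a, In a l -> m <= f a.
Proof.
  induction l as [|a l IH]; intros Hpos.
  - exists 1; split; [lra | intros _ []].
  - destruct IH as [m [Hm Hle]]; [intros b Hb; apply Hpos; right; exact Hb|].
    assert (Ha : 0 < f a) by (apply Hpos; left; reflexivity).
    exists (Rmin (f a) m); split; [apply Rmin_glb_lt; lra|].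
    intros b [<- | Hb]; [apply Rmin_l|].
    eapply Rle_trans; [apply Rmin_r | now apply Hle].
Qed.

Lemma list_upper_bound (A : Type) (f : A -> R) (l : list A) :
  exists m, 0 < m /\ forall a, In a l -> f a <= m.
Proof.
  induction l as [|a l IH].
  - exists 1; split; [lra | intros _ []].
  - destruct IH as [m [Hm Hle]].
    exists (Rmax (f a) m); split; [eapply Rlt_le_trans; [exact Hm | apply Rmax_r]|].
    intros b [<- | Hb]; [apply Rmax_l|].
    eapply Rle_trans; [now apply Hle | apply Rmax_r].
Qed.

Section Chains.
Variables (X : Type) (d : X -> X -> R) (pi : X -> R -> X).
Hypothesis flow : is_flow X d pi.

Lemma flow_add x t s : pi (pi x t) s = pi x (t + s).
Proof. destruct flow as [_ [_ Hadd]]; apply Hadd. Qed.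

Lemma chain_from_weaken l eps eps' t t' x y :
  eps <= eps' -> t' <= t -> chain_from X d pi eps t x y l -> chain_from X d pi eps' t' x y l.
Proof.
  revert x; induction l as [|[xi ti] l IH]; simpl; intros x Heps Ht Hc; [exact Hc|].
  destruct Hc as [Hx [Hti [xn [Hd Hc]]]].
  repeat split; [exact Hx | lra |]; exists xn; split; [lra | now apply IH].
Qed.

Lemma chain_from_snoc l eps t x y s w :
  chain_from X d pi eps t x y l -> t <= s -> d (pi y s) w <= eps ->
  chain_from X d pi eps t x w (l ++ (y, s) :: nil).
Proof.
  revert x; induction l as [|[xi ti] l IH]; simpl; intros x Hc Hs Hd.
  - subst; repeat split; [lra|]; now exists w.
  - destruct Hc as [Hx [Hti [xn [Hdn Hc]]]].
    repeat split; [exact Hx | exact Hti |]; exists xn; split; [exact Hdn | now apply IH].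
Qed.

Lemma chain_from_split_last l eps t x z :
  l <> nil -> chain_from X d pi eps t x z l ->
  exists l' y s, chain_from X d pi eps t x y l' /\ t <= s /\ d (pi y s) z <= eps.
Proof.
  revert x; induction l as [|[xi ti] l IH]; simpl; intros x Hl Hc; [congruence|].
  destruct Hc as [-> [Hti [xn [Hd Hc]]]].
  destruct l as [|p l].
  - simpl in Hc; subst; now exists nil, x, ti.
  - destruct (IH xn ltac:(discriminate) Hc) as [l' [y [s [Hc' [Hs Hys]]]]].
    exists ((x, ti) :: l'), y, s; simpl; repeat split; auto; now exists xn.
Qed.

(* The first jump of the fine chain from [x'] is replaced by the flow from [x]
   for time [t], an [eps/2]-jump to [pi x' t], and the remaining time [ti - t >= t]. *)
Lemma chain_of_near_start eps t x x' z :
  0 < eps -> 0 < t -> chain X d pi (eps / 2) (2 * t) x' z ->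
  d (pi x t) (pi x' t) <= eps / 2 -> chain X d pi eps t x z.
Proof.
  intros He Ht [[|[xi ti] l] [Hl Hc]] Hxx'; [congruence|].
  simpl in Hc; destruct Hc as [-> [Hti [xn [Hd Hc]]]].
  exists ((x, t) :: (pi x' t, ti - t) :: l); split; [discriminate|]; simpl.
  repeat split; [lra|]; exists (pi x' t); split; [lra|].
  repeat split; [lra|]; exists xn; split.
  - rewrite flow_add; replace (t + (ti - t)) with ti by ring; lra.
  - eapply chain_from_weaken; [| | exact Hc]; lra.
Qed.

End Chains.

Section OmegaLimit.
Variables (X : Type) (d : X -> X -> R) (pi : X -> R -> X).
Hypothesis metric : metric_space X d.
Hypothesis flow : is_flow X d pi.

Lemma omega_limit_closed Y : mclosed X d (omega_limit X d pi Y).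
Proof.
  intros z Hz T HT e He.
  destruct (Hz (e / 2) ltac:(lra)) as [z1 [Hz1 Hd1]].
  destruct (Hz1 T HT (e / 2) ltac:(lra)) as [z2 [Hz2 Hd2]].
  exists z2; split; [exact Hz2|].
  pose proof (ms_tri _ _ metric z z1 z2); lra.
Qed.

Lemma omega_limit_flow Y z r :
  0 <= r -> omega_limit X d pi Y z -> omega_limit X d pi Y (pi z r).
Proof.
  intros Hr Hz T HT e He.
  destruct flow as [Hcont _].
  destruct (Hcont z r e He) as [del [Hdel Hnear]].
  destruct (Hz T HT del Hdel) as [w' [[w [s [Yw [Hs ->]]]] Hd]].
  exists (pi w (s + r)); split; [exists w, (s + r); repeat split; auto; lra|].
  rewrite <- (flow_add X d pi flow); apply Hnear; [exact Hd|].
  replace (r - r) with 0 by ring; rewrite Rabs_R0; exact Hdel.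
Qed.

Lemma omega_limit_pos_invariant Y : pos_invariant X pi (omega_limit X d pi Y).
Proof.
  intro z; split.
  - intros [y [s [Hy [Hs ->]]]]; now apply omega_limit_flow.
  - intro Hz; exists z, 0; repeat split; [exact Hz | lra |].
    symmetry; apply (proj1 (proj2 flow)).
Qed.

Lemma attracting_omega_limit U :
  mopen X d U -> (forall z, omega_limit X d pi U z -> U z) ->
  attracting_set X d pi (omega_limit X d pi U).
Proof.
  intros HU Hsub; split; [apply omega_limit_pos_invariant|].
  split; [apply omega_limit_closed|].
  exists U; split; [exists U; auto | auto].
Qed.

Lemma quasi_attracting_of_Inter (I : Type) (B : I -> X -> Prop) A :
  (forall i, attracting_set X d pi (B i)) -> (forall z, A z <-> forall i, B i z) ->
  quasi_attracting X d pi A.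
Proof.
  intros Hatt HA; split; [|now exists I, B].
  intros z Hz; apply HA; intro i.
  destruct (Hatt i) as [_ [Hclosed _]]; apply Hclosed.
  intros e He; destruct (Hz e He) as [w [Hw Hd]].
  exists w; split; [now apply HA | exact Hd].
Qed.

End OmegaLimit.

Section ChainReach.
Variables (X : Type) (d : X -> X -> R) (pi : X -> R -> X) (M : X -> Prop).
Hypothesis metric : metric_space X d.
Hypothesis flow : is_flow X d pi.

Lemma dist_self x : d x x = 0.
Proof. now apply (ms_sep _ _ metric). Qed.

Definition chain_reach (eps t : R) (z : X) : Prop :=
  exists x y l s, M x /\ chain_from X d pi eps t x y l /\ t <= s /\ d (pi y s) z < eps.

Lemma chain_reach_open eps t : mopen X d (chain_reach eps t).
Proof.
  intros z [x [y [l [s [Mx [Hc [Hs Hd]]]]]]].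
  exists (eps - d (pi y s) z); split; [lra|].
  intros w Hw; exists x, y, l, s; repeat split; auto.
  pose proof (ms_tri _ _ metric (pi y s) z w); lra.
Qed.

Lemma chain_of_chain_reach eps t z :
  chain_reach eps t z -> exists x, M x /\ chain X d pi eps t x z.
Proof.
  intros [x [y [l [s [Mx [Hc [Hs Hd]]]]]]]; exists x; split; [exact Mx|].
  exists (l ++ (y, s) :: nil); split; [now destruct l|].
  apply chain_from_snoc; auto; lra.
Qed.

Lemma omega_chain_reach_sub eps t z :
  0 < eps -> 0 < t -> omega_limit X d pi (chain_reach eps t) z -> chain_reach eps t z.
Proof.
  intros He Ht Hz.
  destruct (Hz t ltac:(lra) eps He) as [w' [[w [s' [Vw [Hs' ->]]]] Hd]].
  destruct Vw as [x [y [l [s [Mx [Hc [Hs Hys]]]]]]].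
  exists x, w, (l ++ (y, s) :: nil), s'; repeat split; auto.
  - apply chain_from_snoc; auto; lra.
  - now rewrite (ms_sym _ _ metric).
Qed.

(* The last jump of a fine, slow chain is split: flowing for time [T] lands in
   [chain_reach], and the remaining time [s - T >= t] ends within [e] of [z]. *)
Lemma chain_limit_set_sub_omega eps t z :
  0 < eps -> 0 < t -> chain_limit_set X d pi M z -> omega_limit X d pi (chain_reach eps t) z.
Proof.
  intros He Ht [x [Mx Hz]] T HT e Hee.
  assert (Hmin : 0 < Rmin eps (e / 2)) by (apply Rmin_glb_lt; lra).
  destruct (Hz _ (t + T) Hmin ltac:(lra)) as [l [Hl Hc]].
  destruct (chain_from_split_last _ _ _ _ _ _ _ _ Hl Hc) as [l' [y [s [Hc' [Hs Hys]]]]].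
  exists (pi y s); split.
  - exists (pi y (s - T)), T; repeat split; [|lra|].
    + exists x, y, l', (s - T); repeat split; [exact Mx | | lra |].
      * eapply chain_from_weaken; [apply Rmin_l | | exact Hc']; lra.
      * rewrite dist_self; exact He.
    + rewrite (flow_add X d pi flow); f_equal; ring.
  - rewrite (ms_sym _ _ metric); pose proof (Rmin_r eps (e / 2)); lra.
Qed.

Record chain_obstruction (z : X) := {
  obs_point : X; obs_eps : R; obs_time : R; obs_radius : R;
  obs_eps_pos : 0 < obs_eps;
  obs_time_pos : 0 < obs_time;
  obs_no_chain : ~ chain X d pi obs_eps obs_time obs_point z;
  obs_flow_near : forall y, d obs_point y < obs_radius ->
    d (pi obs_point obs_time) (pi y obs_time) < obs_eps / 2 }.

Lemma chain_obstruction_cover z x :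
  M x -> ~ chain_limit X d pi x z ->
  exists o : chain_obstruction z, d (obs_point z o) x < obs_radius z o.
Proof.
  intros Mx Hx.
  destruct (not_all_ex_not _ _ Hx) as [eps Heps].
  destruct (not_all_ex_not _ _ Heps) as [t Ht].
  apply imply_to_and in Ht as [He Ht]; apply imply_to_and in Ht as [Ht Hnc].
  destruct flow as [Hcont _].
  destruct (Hcont x t (eps / 2) ltac:(lra)) as [del [Hdel Hnear]].
  assert (Hball : forall y, d x y < del -> d (pi x t) (pi y t) < eps / 2).
  { intros y Hy; apply Hnear; [exact Hy|].
    replace (t - t) with 0 by ring; rewrite Rabs_R0; exact Hdel. }
  exists (Build_chain_obstruction z x eps t del He Ht Hnc Hball); simpl.
  now rewrite dist_self.
Qed.

Lemma chain_limit_set_of_chain_reach z :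
  mcompact X d M -> (forall eps t, 0 < eps -> 0 < t -> chain_reach eps t z) ->
  chain_limit_set X d pi M z.
Proof.
  intros HM Hz; apply NNPP; intro Hn.
  destruct (HM (chain_obstruction z)
    (fun o y => d (obs_point z o) y < obs_radius z o)) as [l Hl].
  - intros o y Hy; exists (obs_radius z o - d (obs_point z o) y); split; [lra|].
    intros w Hw; pose proof (ms_tri _ _ metric (obs_point z o) y w); lra.
  - intros x Mx; apply chain_obstruction_cover; [exact Mx|].
    intro Hx; apply Hn; now exists x.
  - destruct (list_lower_bound _ (fun o => obs_eps z o / 2) l) as [e0 [He0 Hle]].
    { intros o _; pose proof (obs_eps_pos z o); lra. }
    destruct (list_upper_bound _ (fun o => 2 * obs_time z o) l) as [t0 [Ht0 Hge]].
    destruct (chain_of_chain_reach _ _ _ (Hz e0 t0 He0 Ht0)) as [y [My [cl [Hcl Hcc]]]].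
    destruct (Hl y My) as [o [Ho Hd]].
    apply (obs_no_chain z o), chain_of_near_start with y;
      [apply flow | apply obs_eps_pos | apply obs_time_pos | |].
    + exists cl; split; [exact Hcl|].
      eapply chain_from_weaken; [apply Hle | apply Hge | exact Hcc]; exact Ho.
    + left; now apply obs_flow_near.
Qed.

End ChainReach.

Theorem theorem3p6 (X : Type) (d : X -> X -> R) (pi : X -> R -> X)
  (M : X -> Prop) :
  metric_space X d -> locally_compact X d -> is_flow X d pi ->
  mcompact X d M ->
  quasi_attracting X d pi (chain_limit_set X d pi M).
Proof.
  intros metric _ flow HM.
  set (I := {p : R * R | 0 < fst p /\ 0 < snd p}).
  set (B := fun i : I =>
    omega_limit X d pi (chain_reach X d pi M (fst (proj1_sig i)) (snd (proj1_sig i)))).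
  apply (quasi_attracting_of_Inter X d pi I B).
  - intros [[eps t] [He Ht]]; apply attracting_omega_limit; auto.
    + apply chain_reach_open; exact metric.
    + intro z; now apply omega_chain_reach_sub.
  - intro z; split.
    + intros Hz [[eps t] [He Ht]]; now apply chain_limit_set_sub_omega.
    + intro Hz; apply chain_limit_set_of_chain_reach; auto.
      intros eps t He Ht; apply omega_chain_reach_sub; auto.
      exact (Hz (exist _ (eps, t) (conj He Ht))).
Qed.
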